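(* Let $G=\langle a,b,c,d\mid [a,b]=[c,d]\rangle$ be the fundamental group of a closed surface of genus 2, with $[x,y]=xyx^{-1}y^{-1}$, and let $\tau$ be the automorphism of $G$ given by $\tau(a)=a^{-1}$, $\tau(b)=b^{-1}$, $\tau(c)=xc^{-1}x^{-1}$, $\tau(d)=xd^{-1}x^{-1}$ where $x=a^{-1}b^{-1}dc$ (induced by the hyperelliptic involution). Let $q$ be odd and let $f:G\to\mathrm{PSL}_2(\mathbb{F}_q)$ be an irreducible homomorphism. If $f$ lifts to a homomorphism $G\to\mathrm{SL}_2(\mathbb{F}_q)$, then there is $T\in\mathrm{PGL}_2(\mathbb{F}_q)$ such that $T f(\gamma)T^{-1}=f(\tau(\gamma))$ for all $\gamma\in G$.
   Context: A homomorphism into $\mathrm{PSL}_2(\mathbb{F}_q)$ is irreducible if its image has no common fixed point in its action on the projective line over the algebraic closure of $\mathbb{F}_q$ (equivalently, a lift to $\mathrm{SL}_2$ is not conjugate into upper triangular matrices over $\overline{\mathbb{F}}_q$). Here $\mathrm{PSL}_2(\mathbb{F}_q)$ is regarded as a subgroup of $\mathrm{PGL}_2(\mathbb{F}_q)$. *)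

From HB Require Import structures.
From mathcomp Require Import all_boot all_order all_algebra all_fingroup all_field.
Set Implicit Arguments. Unset Strict Implicit. Unset Printing Implicit Defensive.
Import GRing.Theory.
Local Open Scope ring_scope.

Inductive gen := ga | gb | gc | gd.

(* Words in the generators: a letter is (generator, inverted?). *)
Definition word := seq (gen * bool).

Definition winv (w : word) : word := rev (map (fun l => (l.1, ~~ l.2)) w).

Definition xw : word := [:: (ga, true); (gb, true); (gd, false); (gc, false)].

Definition tau_gen (g : gen) : word :=
  match g with
  | ga => [:: (ga, true)]
  | gb => [:: (gb, true)]
  | gc => xw ++ [:: (gc, true)] ++ winv xw
  | gd => xw ++ [:: (gd, true)] ++ winv xw
  end.

Definition tau_letter (l : gen * bool) : word :=
  if l.2 then winv (tau_gen l.1) else tau_gen l.1.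

Definition tau (w : word) : word := flatten (map tau_letter w).

Section Mx.
Variable F : fieldType.

Definition eval (M : gen -> 'M[F]_2) (w : word) : 'M[F]_2 :=
  foldr (fun l acc => (if l.2 then invmx (M l.1) else M l.1) *m acc) 1%:M w.

Definition mcomm (A B : 'M[F]_2) : 'M[F]_2 := A *m B *m invmx A *m invmx B.

(* equality in PGL_2(F): equal up to a nonzero scalar *)
Definition proj_eq (A B : 'M[F]_2) : Prop := exists c : F, c != 0 /\ A = c *: B.
End Mx.

(* Irreducibility of the homomorphism w |-> class of eval M w: the image has
   no common fixed point on P^1 over an algebraic closure, i.e. over any
   algebraically closed extension L of F there is no common eigenline. *)
Definition irreducible_hom (F : fieldType) (M : gen -> 'M[F]_2) : Prop :=
  forall (L : closedFieldType) (iota : {rmorphism F -> L}),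
    ~ exists v : 'cV[L]_2, v != 0 /\
        forall w : word, exists lam : L, map_mx iota (eval M w) *m v = lam *: v.

From mathcomp Require Import all_boot all_algebra all_field.
From mathcomp Require Import ring.

(* Let A, B, C, D be the SL_2 lifts of the generators, rescaled so that
   A B A^-1 B^-1 = C D C^-1 D^-1, and let X be the image of x.  It suffices to
   find T != 0 with T A = A^-1 T, T B = B^-1 T and the same relations for X^-1 T
   against C and D: then T f(w) = f(tau w) T for every word w, and T is
   invertible, since otherwise its kernel would be a line fixed by the whole
   image of f, against irreducibility.
   In SL_2 a traceless Y with tr (Y R) = 0 satisfies Y R = R^-1 Y; hence the
   bracket PQ - QP does so for every R commuting with P or with Q.  If A and B
   do not commute, T = AB - BA works, because the commutator relation forces
   AB - BA = X (CD - DC).  If they commute, so do C and D, a single bracket Y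
   serves for all four generators, and T = (BA)^-1 Y. *)

Set Implicit Arguments.
Unset Strict Implicit.
Unset Printing Implicit Defensive.
Import GRing.Theory.
Local Open Scope ring_scope.

Section Inverts.
Variable R : unitRingType.
Implicit Types x y u t : R.

Definition inverts y x := y * x = x^-1 * y.

Definition bracket x y := x * y - y * x.

Lemma inverts_mulVl u y x : u \is a GRing.unit -> x \is a GRing.unit ->
  GRing.comm u x -> inverts y x -> inverts (u^-1 * y) x.
Proof.
move=> uu ux cux yx; rewrite /inverts -mulrA yx !mulrA; congr (_ * _).
by apply/commr_sym/commrV/commr_sym/commrV.
Qed.

Lemma intertwine_of_inverts u t x : u \is a GRing.unit ->
  inverts (u^-1 * t) x -> t * x = u * x^-1 * u^-1 * t.
Proof.
move=> uu tx; have uVu : u^-1 \is a GRing.unit by rewrite unitrV.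
apply: (mulrI uVu).
by rewrite mulrA tx -!mulrA mulKr.
Qed.

End Inverts.

Section Mx2.
Variable F : fieldType.
Implicit Types P Q R Y : 'M[F]_2.

Let lift0_ord2 : lift ord0 ord0 = 1 :> 'I_2. Proof. exact: val_inj. Qed.
Let lift1_ord2 : lift 1 ord0 = 0 :> 'I_2. Proof. exact: val_inj. Qed.

Lemma mulmx2E m n (A : 'M[F]_(m, 2)) (B : 'M[F]_(2, n)) i j :
  (A *m B) i j = A i 0 * B 0 j + A i 1 * B 1 j.
Proof. by rewrite mxE big_ord_recl big_ord1 lift0_ord2. Qed.

Lemma mxtrace2E R : \tr R = R 0 0 + R 1 1.
Proof. by rewrite /mxtrace big_ord_recl big_ord1 lift0_ord2. Qed.

Lemma det2E R : \det R = R 0 0 * R 1 1 - R 0 1 * R 1 0.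
Proof.
rewrite (expand_det_row _ 0) big_ord_recl big_ord1 /cofactor !det_mx11 !mxE /=.
by rewrite lift0_ord2 lift1_ord2 /=; ring.
Qed.

Lemma ord2P (i : 'I_2) : i = 0 \/ i = 1.
Proof. by case: i => [[|[|//]] lt_i2]; [left | right]; apply: val_inj. Qed.

Local Ltac mx2_ring :=
  apply/matrixP; do 2 (let k := fresh "k" in move=> k; case: (ord2P k) => ->);
  rewrite ?(mulmx2E, mxE, mxtrace2E, det2E) /=; ring.

Lemma mx2_cayley_hamilton R : R * ((\tr R)%:M - R) = (\det R)%:M.
Proof. mx2_ring. Qed.

Lemma mx2_mul_swap Y R :
  Y * R = ((\tr R)%:M - R) * Y + \tr Y *: R + (\tr (Y * R) - \tr Y * \tr R)%:M.
Proof. mx2_ring. Qed.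

Lemma mx2_sandwich Q P : Q * P * Q = \tr (Q * P) *: Q - \det Q *: ((\tr P)%:M - P).
Proof. mx2_ring. Qed.

Lemma det1_unit R : \det R = 1 -> R \is a GRing.unit.
Proof. by move=> dR; rewrite unitmxE dR unitr1. Qed.

Lemma invr_det1 R : \det R = 1 -> R^-1 = (\tr R)%:M - R.
Proof. by move=> dR; rewrite -[RHS](mulKr (det1_unit dR)) mx2_cayley_hamilton dR mulr1. Qed.

Lemma mxtraceB P Q : \tr (P - Q) = \tr P - \tr Q.
Proof. exact: raddfB. Qed.

Lemma mxtrace_mulrC P Q : \tr (P * Q) = \tr (Q * P).
Proof. exact: mxtrace_mulC. Qed.

Lemma traceless_inverts Y R : \tr Y = 0 -> \det R = 1 -> \tr (Y * R) = 0 -> inverts Y R.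
Proof.
move=> trY dR trYR; rewrite /inverts mx2_mul_swap trY trYR invr_det1 //.
by rewrite scale0r mul0r subrr addr0 -scalemx1 scale0r addr0.
Qed.

Lemma mxtrace_bracket P Q : \tr (bracket P Q) = 0.
Proof. by rewrite /bracket mxtraceB mxtrace_mulrC subrr. Qed.

Lemma bracket_inverts P Q R :
  \det R = 1 -> GRing.comm P R \/ GRing.comm Q R -> inverts (bracket P Q) R.
Proof.
move=> dR PQR; apply: traceless_inverts => //; first exact: mxtrace_bracket.
rewrite /bracket mulrBl mxtraceB; apply/eqP; rewrite subr_eq0; apply/eqP.
case: PQR => cR.
- by rewrite -[in RHS]mulrA cR [in RHS]mulrA [in RHS]mxtrace_mulrC mulrA.
- by rewrite -[in LHS]mulrA cR [in LHS]mulrA [in LHS]mxtrace_mulrC mulrA.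
Qed.

Lemma sandwich_traceless Q P :
  \det Q = 1 -> \tr (Q * P) = 0 -> Q * P * Q = - ((\tr P)%:M - P).
Proof. by move=> dQ trQP; rewrite mx2_sandwich trQP scale0r sub0r dQ scale1r. Qed.

End Mx2.

Section NoncommutingPair.
Variable F : fieldType.
Implicit Types (P Q R : 'M[F]_2) (S : seq 'M[F]_2).

Lemma exists_noncomm_centralizing S : {in S &, forall P Q, GRing.comm P Q} ->
  exists P Q, P * Q != Q * P /\ {in S, forall R, GRing.comm P R}.
Proof.
(* If S is central, the nilpotent N is a non-central matrix centralizing it. *)
move=> cS; set N : 'M[F]_2 := delta_mx 0 1; set N' : 'M[F]_2 := delta_mx 1 0.
have nNN' : N * N' != N' * N.
  apply/eqP => /matrixP/(_ 0 0)/eqP.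
  by rewrite !mulmx2E !mxE /= !(mul0r, mulr1, add0r) oner_eq0.
case: (boolP (all (fun R => N * R == R * N) S)) => [/allP cN | /allPn [R SR nNR]].
  by exists N, N'; split=> // R /cN /eqP.
by exists R, N; split=> [|R' SR']; [rewrite eq_sym | exact: cS].
Qed.

Lemma exists_noncomm_pair (S1 S2 : seq 'M[F]_2) :
  {in S1 &, forall P Q, GRing.comm P Q} -> {in S2 &, forall P Q, GRing.comm P Q} ->
  exists P Q, P * Q != Q * P /\
    {in S1 ++ S2, forall R, GRing.comm P R \/ GRing.comm Q R}.
Proof.
move=> cS1 cS2.
case: (boolP (all (fun P => all (fun Q => P * Q == Q * P) S2) S1))
  => [/allP c12 | /allPn [P S1P /allPn [Q S2Q nPQ]]]; last first.
  exists P, Q; split=> // R; rewrite mem_cat => /orP[] SR.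
  - by left; apply: cS1.
  - by right; apply: cS2.
have cS : {in S1 ++ S2 &, forall P Q, GRing.comm P Q}.
  have c12' P Q : P \in S1 -> Q \in S2 -> GRing.comm P Q.
    by move=> /c12/allP/(_ Q) cPS2 /cPS2/eqP.
  move=> P Q; rewrite !mem_cat => /orP[] SP /orP[] SQ.
  - exact: cS1.
  - exact: c12'.
  - exact/commr_sym/c12'.
  - exact: cS2.
have [P [Q [nPQ cP]]] := exists_noncomm_centralizing cS.
by exists P, Q; split=> // R /cP; left.
Qed.

Lemma exists_common_inverter (S1 S2 : seq 'M[F]_2) : {in S1 ++ S2, forall R, \det R = 1} ->
  {in S1 &, forall P Q, GRing.comm P Q} -> {in S2 &, forall P Q, GRing.comm P Q} ->
  exists2 Y, Y != 0 & {in S1 ++ S2, forall R, inverts Y R}.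
Proof.
move=> dS cS1 cS2; have [P [Q [nPQ cPQ]]] := exists_noncomm_pair cS1 cS2.
exists (bracket P Q); first by rewrite subr_eq0.
by move=> R SR; apply: bracket_inverts; [apply: dS | apply: cPQ].
Qed.

End NoncommutingPair.

Section Intertwiner.
Variable F : fieldType.
Variables A B C D : 'M[F]_2.
Hypotheses (dA : \det A = 1) (dB : \det B = 1) (dC : \det C = 1) (dD : \det D = 1).
Hypothesis commutator_ABCD : A * B * A^-1 * B^-1 = C * D * C^-1 * D^-1.

Local Notation X := (A^-1 * B^-1 * D * C).

Let uA := det1_unit dA.
Let uB := det1_unit dB.
Let uC := det1_unit dC.
Let uD := det1_unit dD.
Let uBA : B * A \is a GRing.unit. Proof. by rewrite unitrMl. Qed.
Let uDC : D * C \is a GRing.unit. Proof. by rewrite unitrMl. Qed.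

Lemma x_eq_invBA_DC : X = (B * A)^-1 * (D * C).
Proof. by rewrite invrM // !mulrA. Qed.

Lemma bracket_commutator_eq : bracket A B = X * bracket C D.
Proof.
(* Both sides of sandwichK equal minus the adjugate of K - 1. *)
set K := A * B * A^-1 * B^-1.
have brAB : bracket A B = (K - 1) * (B * A).
  by rewrite /bracket mulrBl mul1r /K mulrA (mulrVK uB) (mulrVK uA).
have brCD : bracket C D = (K - 1) * (D * C).
  by rewrite /bracket mulrBl mul1r /K commutator_ABCD mulrA (mulrVK uD) (mulrVK uC).
have dBA : \det (B * A) = 1 by rewrite det_mulmx dB dA mulr1.
have dDC : \det (D * C) = 1 by rewrite det_mulmx dD dC mulr1.
have trBA : \tr (B * A * (K - 1)) = 0 by rewrite mxtrace_mulrC -brAB mxtrace_bracket.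
have trDC : \tr (D * C * (K - 1)) = 0 by rewrite mxtrace_mulrC -brCD mxtrace_bracket.
have sandwichK : B * A * bracket A B = D * C * bracket C D.
  rewrite brAB brCD mulrA (sandwich_traceless dBA trBA).
  by rewrite mulrA (sandwich_traceless dDC trDC).
by rewrite x_eq_invBA_DC -mulrA -sandwichK mulKr.
Qed.

Lemma commutator_eq_comm : GRing.comm A B -> GRing.comm C D.
Proof.
move=> cAB; have CD1 : C * D * C^-1 * D^-1 = 1.
  by rewrite -commutator_ABCD cAB mulrK // mulrV.
by rewrite /GRing.comm -[RHS]mul1r -CD1 mulrA (mulrVK uD) (mulrVK uC).
Qed.

Lemma exists_intertwiner : exists2 T, T != 0 &
  [/\ inverts T A, inverts T B, inverts (X^-1 * T) C & inverts (X^-1 * T) D].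
Proof.
have uX : X \is a GRing.unit by rewrite x_eq_invBA_DC unitrMl // unitrV.
have [cAB | ncAB] := eqVneq (A * B) (B * A); last first.
  exists (bracket A B); first by rewrite subr_eq0.
  have [invC invD] : inverts (X^-1 * bracket A B) C /\ inverts (X^-1 * bracket A B) D.
    rewrite bracket_commutator_eq mulKr //.
    by split; apply: bracket_inverts => //; [left | right].
  by split=> //; apply: bracket_inverts => //; [left | right].
have cCD := commutator_eq_comm cAB.
have comm_mul (P Q : 'M[F]_2) : GRing.comm P Q -> GRing.comm (Q * P) P /\ GRing.comm (Q * P) Q.
  by move=> cPQ; split; apply/commr_sym/commrM.
have [cBA_A cBA_B] := comm_mul _ _ cAB.
have [cDC_C cDC_D] := comm_mul _ _ cCD.
have pairwise_comm (P Q : 'M[F]_2) : GRing.comm P Q ->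
    {in [:: P; Q] &, forall R R', GRing.comm R R'}.
  by move=> cPQ R R'; rewrite !inE => /orP[]/eqP-> /orP[]/eqP->.
have [Y Y0 invY] : exists2 Y, Y != 0 & {in [:: A; B] ++ [:: C; D], forall R, inverts Y R}.
  apply: exists_common_inverter; [|exact: pairwise_comm..].
  by move=> R; rewrite mem_cat !inE => /orP[]/orP[]/eqP->.
exists ((B * A)^-1 * Y).
  by apply: contraNneq Y0 => Y0; rewrite -(mulVKr uBA Y) Y0 mulr0.
have -> : X^-1 * ((B * A)^-1 * Y) = (D * C)^-1 * Y.
  by rewrite x_eq_invBA_DC invrM ?unitrV // invrK -mulrA mulVKr.
split; apply: inverts_mulVl => //; apply: invY; by rewrite mem_cat !inE eqxx ?orbT.
Qed.

End Intertwiner.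

Section KernelLine.
Variable F : fieldType.

Lemma kermx_line n (A : 'M[F]_n.+1) (u v : 'cV[F]_n.+1) :
  (n <= \rank A)%N -> u != 0 -> A *m u = 0 -> A *m v = 0 -> exists a, v = a *: u.
Proof.
move=> rkA u0 Au Av.
have inK (y : 'cV_n.+1) : A *m y = 0 -> (y^T <= kermx A^T)%MS.
  by move=> Ay; rewrite sub_kermx -trmx_mul Ay trmx0.
have Ku : (kermx A^T <= u^T)%MS.
  rewrite -(mxrank_leqif_sup (inK u Au)).2 eqn_leq mxrankS ?inK //=.
  by rewrite mxrank_ker mxrank_tr rank_rV trmx_eq0 u0 leq_subLR addn1 ltnS.
have /sub_rVP [a va] := submx_trans (inK v Av) Ku.
by exists a; apply: trmx_inj; rewrite va linearZ.
Qed.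

Lemma corank1_eigenvector n (T : 'M[F]_n.+1) : \rank T = n ->
  exists2 v : 'cV_n.+1, v != 0 & forall R Z, T *m R = Z *m T -> exists a, R *m v = a *: v.
Proof.
move=> rkT; have nT : T \notin unitmx by apply/negP => /mxrank_unit; rewrite rkT; apply: n_Sn.
move: nT; rewrite unitmxE unitfE negbK -det_tr => /det0P [w w0 wT].
have Tw : T *m w^T = 0 by rewrite -[T]trmxK -trmx_mul wT trmx0.
exists w^T; first by rewrite trmx_eq0.
move=> R Z TR; apply: (kermx_line _ _ Tw); first by rewrite rkT.
- by rewrite trmx_eq0.
- by rewrite mulmxA TR -mulmxA Tw mulmx0.
Qed.

End KernelLine.

Section Words.
Variable F : fieldType.
Variable M : gen -> 'M[F]_2.
Hypothesis uM : forall g, M g \is a GRing.unit.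

Lemma eval_nil : eval M [::] = 1.
Proof. by []. Qed.

Lemma eval_cons l w : eval M (l :: w) = (if l.2 then (M l.1)^-1 else M l.1) * eval M w.
Proof. by []. Qed.

Lemma eval_cat w1 w2 : eval M (w1 ++ w2) = eval M w1 * eval M w2.
Proof.
elim: w1 => [|l w1 IHw]; first by rewrite eval_nil mul1r.
by rewrite cat_cons !eval_cons IHw mulrA.
Qed.

Let letter_unit (l : gen * bool) : (if l.2 then (M l.1)^-1 else M l.1) \is a GRing.unit.
Proof. by case: l.2; rewrite ?unitrV uM. Qed.

Lemma eval_unit w : eval M w \is a GRing.unit.
Proof.
elim: w => [|l w IHw]; first by rewrite eval_nil unitr1.
by rewrite eval_cons unitrMl.
Qed.

Lemma eval_winv w : eval M (winv w) = (eval M w)^-1.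
Proof.
elim: w => [|l w IHw]; first by rewrite eval_nil invr1.
have -> : winv (l :: w) = winv w ++ [:: (l.1, ~~ l.2)].
  by rewrite /winv map_cons rev_cons -cats1.
rewrite eval_cat IHw !eval_cons eval_nil mulr1 invrM ?eval_unit //.
by case: l.2; rewrite ?invrK.
Qed.

Lemma eval_xw : eval M xw = (M ga)^-1 * (M gb)^-1 * M gd * M gc.
Proof. by rewrite !eval_cons eval_nil mulr1 !mulrA. Qed.

Lemma eval_conj_inv g :
  eval M (xw ++ [:: (g, true)] ++ winv xw) = eval M xw * (M g)^-1 * (eval M xw)^-1.
Proof. by rewrite !eval_cat eval_winv eval_cons eval_nil mulr1 mulrA. Qed.

Lemma eval_tau_intertwine T : (forall g, T * M g = eval M (tau_gen g) * T) ->
  forall w, T * eval M w = eval M (tau w) * T.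
Proof.
move=> Tg; elim=> [|l w IHw]; first by rewrite eval_nil mulr1 mul1r.
have Tl : T * (if l.2 then (M l.1)^-1 else M l.1) = eval M (tau_letter l) * T.
  rewrite /tau_letter; case: l.2; last exact: Tg.
  apply: (mulIr (uM l.1)); rewrite eval_winv mulrVK // -mulrA Tg mulKr //.
  exact: eval_unit.
have -> : tau (l :: w) = tau_letter l ++ tau w by [].
by rewrite eval_cons eval_cat mulrA Tl -mulrA IHw mulrA.
Qed.

End Words.

Lemma exists_tau_intertwiner (F : fieldType) (M : gen -> 'M[F]_2) :
  (forall g, \det (M g) = 1) ->
  M ga * M gb * (M ga)^-1 * (M gb)^-1 = M gc * M gd * (M gc)^-1 * (M gd)^-1 ->
  exists2 T, T != 0 & forall w, T * eval M w = eval M (tau w) * T.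
Proof.
move=> dM rel; have uM g := det1_unit (dM g).
have [T T0 [Ta Tb Tc Td]] := exists_intertwiner (dM ga) (dM gb) (dM gc) (dM gd) rel.
rewrite -eval_xw in Tc Td.
exists T => //; apply: eval_tau_intertwine => // -[].
- by rewrite Ta eval_cons eval_nil mulr1.
- by rewrite Tb eval_cons eval_nil mulr1.
- by rewrite eval_conj_inv; have := intertwine_of_inverts (eval_unit uM xw) Tc.
- by rewrite eval_conj_inv; have := intertwine_of_inverts (eval_unit uM xw) Td.
Qed.

Lemma irreducible_intertwiner_unit (F : countFieldType) (M : gen -> 'M[F]_2) T :
  irreducible_hom M -> T != 0 -> (forall w, exists Z, T *m eval M w = Z *m T) ->
  T \in unitmx.
Proof.
move=> irrM T0 TM; apply/negPn/negP => nT.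
have rkT : \rank T = 1%N.
  apply/eqP; rewrite eqn_leq lt0n mxrank_eq0 T0 andbT -ltnS ltn_neqAle rank_leq_row.
  by rewrite andbT -/(row_free T) row_free_unit.
have [v v0 eig] := corank1_eigenvector rkT.
have [L [iota _]] := countable_algebraic_closure F.
apply: (irrM L iota); exists (map_mx iota v); split; first by rewrite map_mx_eq0.
move=> w; have [Z /eig [a Mv]] := TM w.
by exists (iota a); rewrite -map_mxM Mv map_mxZ.
Qed.

Lemma mcommZ (F : fieldType) (a b : F) (A B : 'M[F]_2) :
  a != 0 -> b != 0 -> A \in unitmx -> B \in unitmx ->
  mcomm (a *: A) (b *: B) = mcomm A B.
Proof.
move=> a0 b0 uA uB; rewrite /mcomm !invmxZ ?unitmxZ ?unitfE //.
rewrite -!scalemxAl -!scalemxAr -!scalemxAl !scalerA.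
by rewrite (_ : a * (b^-1 / a * b) = 1) ?scale1r //; field; rewrite a0 b0.
Qed.

Unset Implicit Arguments.

Theorem theorem5p4 (F : finFieldType) (M : gen -> 'M[F]_2) :
  odd #|F| ->
  (forall g, \det (M g) = 1) ->
  proj_eq (mcomm (M ga) (M gb)) (mcomm (M gc) (M gd)) ->
  irreducible_hom M ->
  (exists N : gen -> 'M[F]_2,
      (forall g, \det (N g) = 1) /\ (forall g, proj_eq (N g) (M g)) /\
      mcomm (N ga) (N gb) = mcomm (N gc) (N gd)) ->
  exists T : 'M[F]_2, T \in unitmx /\
    forall w : word, proj_eq (T *m eval M w *m invmx T) (eval M (tau w)).
Proof.
move=> _ dM _ irrM [N [_ [NM commN]]].
have mcommN g g' : mcomm (N g) (N g') = mcomm (M g) (M g').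
  have [a [a0 ->]] := NM g; have [b [b0 ->]] := NM g'.
  by apply: mcommZ; rewrite // det1_unit.
have commM : mcomm (M ga) (M gb) = mcomm (M gc) (M gd) by rewrite -!mcommN.
have [T T0 TM] := exists_tau_intertwiner dM commM.
have uT : T \in unitmx.
  by apply: irreducible_intertwiner_unit irrM T0 _ => w; exists (eval M (tau w)); apply: TM.
exists T; split => // w; exists 1; split; first exact: oner_neq0.
by rewrite scale1r -[LHS]/(T * eval M w / T) TM mulrK.
Qed.
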